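(* Let $\|\cdot\|$ be a strictly convex norm on $\mathbb{R}^n$ that is continuously differentiable on $\mathbb{R}^n\setminus\{0\}$, let $N(x)$ denote its gradient at $x\ne 0$, and set $h(x,y)=\|y\|-\langle y,N(x)\rangle$ for $x\neq0$, $y\in\mathbb{R}^n$. Suppose that there are constants $r>0$ and $\Lambda>2$ such that $$\Lambda\, h(x,x+y)\le h(x,x+2y)\quad\text{for all } x\neq 0 \text{ and } \|y\|\le r\|x\|.$$ Then $$\Big(3-\frac{2}{\Lambda}\Big)h(x,x+y)\le h(x,x+2y)\quad\text{for all } x\neq 0\text{ and }\|y\|\le 2r\|x\|.$$
   Context: $\langle\cdot,\cdot\rangle$ is the Euclidean inner product. Strict convexity of the norm means: if $x,y\neq0$ and $\|x+y\|=\|x\|+\|y\|$, then $y=\alpha x$ for some $\alpha>0$. *)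

From HB Require Import structures.
From mathcomp Require Import all_boot all_order all_algebra.
From mathcomp Require Import all_classical all_reals all_analysis.
Set Implicit Arguments. Unset Strict Implicit. Unset Printing Implicit Defensive.
Import Order.TTheory GRing.Theory Num.Theory.
Import numFieldNormedType.Exports.
Local Open Scope ring_scope.

Definition dotv {R : realType} {n : nat} (u v : 'rV[R]_n) : R :=
  \sum_(i < n) u 0 i * v 0 i.

Definition is_norm {R : realType} {n : nat} (nrm : 'rV[R]_n -> R) : Prop :=
  [/\ forall x, 0 <= nrm x,
      forall x, nrm x = 0 -> x = 0,
      forall (a : R) x, nrm (a *: x) = `|a| * nrm x
    & forall x y, nrm (x + y) <= nrm x + nrm y].

Definition strictly_convex_norm {R : realType} {n : nat} (nrm : 'rV[R]_n -> R) : Prop :=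
  forall x y : 'rV[R]_n, x != 0 -> y != 0 -> nrm (x + y) = nrm x + nrm y ->
    exists2 a : R, 0 < a & y = a *: x.

Definition C1_away_from_0_with_gradient {R : realType} {n : nat}
    (nrm : 'rV[R]_n -> R) (N : 'rV[R]_n -> 'rV[R]_n) : Prop :=
  forall x : 'rV[R]_n, x != 0 ->
    [/\ differentiable nrm x,
        (forall y, ('d nrm x : 'rV[R]_n -> R) y = dotv y (N x))
      & {for x, continuous N}].

Definition hfun {R : realType} {n : nat} (nrm : 'rV[R]_n -> R)
    (N : 'rV[R]_n -> 'rV[R]_n) (x y : 'rV[R]_n) : R :=
  nrm y - dotv y (N x).

From HB Require Import structures.
From mathcomp Require Import all_boot all_order all_algebra.
From mathcomp Require Import all_classical all_reals all_analysis.
From mathcomp Require Import ring lra.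
Set Implicit Arguments. Unset Strict Implicit. Unset Printing Implicit Defensive.
Import Order.TTheory GRing.Theory Num.Theory.
Import numFieldNormedType.Exports.
Local Open Scope ring_scope.

(* For fixed x, u |-> h(x, u) is a norm minus a linear form, hence positively
   homogeneous and subadditive.  Since 3 (x + y) = (x + 2y) + 2 (x + y/2), this
   gives 3 h(x, x+y) <= h(x, x+2y) + 2 h(x, x+y/2), and the hypothesis applied
   to y/2 (which is admissible when |y| <= 2r|x|) bounds the last term by
   (2/Lambda) h(x, x+y). *)

Section InnerProduct.
Variables (R : realType) (n : nat).
Implicit Types (u v w : 'rV[R]_n) (a : R).

Lemma dotvDl u v w : dotv (u + v) w = dotv u w + dotv v w.
Proof. by rewrite /dotv -big_split; apply: eq_bigr => i _; rewrite mxE mulrDl. Qed.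

Lemma dotvZl a u w : dotv (a *: u) w = a * dotv u w.
Proof. by rewrite /dotv mulr_sumr; apply: eq_bigr => i _; rewrite mxE mulrA. Qed.

End InnerProduct.

Section HfunConvexity.
Variables (R : realType) (n : nat) (nrm : 'rV[R]_n -> R) (N : 'rV[R]_n -> 'rV[R]_n).
Hypothesis nrm_norm : is_norm nrm.
Implicit Types (x u v : 'rV[R]_n) (a : R).

Lemma hfunD x u v : hfun nrm N x (u + v) <= hfun nrm N x u + hfun nrm N x v.
Proof.
case: nrm_norm => _ _ _ nrmD; rewrite /hfun dotvDl.
have := nrmD u v; lra.
Qed.

Lemma hfunZ x a u : 0 <= a -> hfun nrm N x (a *: u) = a * hfun nrm N x u.
Proof.
case: nrm_norm => _ _ nrmZ _ a_ge0.
by rewrite /hfun nrmZ dotvZl ger0_norm // mulrBr.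
Qed.

Lemma hfun_midpoint x y :
  3 * hfun nrm N x (x + y) <=
  hfun nrm N x (x + 2 *: y) + 2 * hfun nrm N x (x + 2^-1 *: y).
Proof.
have split3 : 3 *: (x + y) = (x + 2 *: y) + 2 *: (x + 2^-1 *: y).
  by apply/rowP => i; rewrite !mxE; field.
rewrite -hfunZ // split3 -(hfunZ x (x + 2^-1 *: y)) //; exact: hfunD.
Qed.

End HfunConvexity.

Theorem lemma4p4 (R : realType) (n : nat) (nrm : 'rV[R]_n -> R)
    (N : 'rV[R]_n -> 'rV[R]_n) (r Lambda : R) :
  is_norm nrm ->
  strictly_convex_norm nrm ->
  C1_away_from_0_with_gradient nrm N ->
  0 < r -> 2 < Lambda ->
  (forall x y : 'rV[R]_n, x != 0 -> nrm y <= r * nrm x ->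
     Lambda * hfun nrm N x (x + y) <= hfun nrm N x (x + 2 *: y)) ->
  forall x y : 'rV[R]_n, x != 0 -> nrm y <= 2 * r * nrm x ->
     (3 - 2 / Lambda) * hfun nrm N x (x + y) <= hfun nrm N x (x + 2 *: y).
Proof.
move=> nrm_norm _ _ r_gt0 Lambda_gt2 hyp x y x_neq0 y_small.
have Lambda_gt0 : 0 < Lambda by lra.
have half_small : nrm (2^-1 *: y) <= r * nrm x.
  by case: nrm_norm => _ _ nrmZ _; rewrite nrmZ ger0_norm //; lra.
have half_bound := hyp _ _ x_neq0 half_small.
rewrite scalerA divff ?scale1r ?pnatr_eq0 // in half_bound.
have mid := hfun_midpoint N nrm_norm x y.
have half_le : hfun nrm N x (x + 2^-1 *: y) <= hfun nrm N x (x + y) / Lambda.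
  by rewrite ler_pdivlMr // mulrC.
rewrite mulrBl mulrAC -mulrA; lra.
Qed.
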